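(* Let $(X,Y)\sim P_{X,Y}$ be random variables taking values in $\mathcal{X}\times\mathcal{Y}$, where $|\mathcal{X}|=2$ and $\mathcal{Y}$ is a finite (discrete) set. For any natural number $L\geq 2$, there exists a random variable $Z$, jointly distributed with $(X,Y)$, taking values in a set $\mathcal{Z}$ of cardinality $|\mathcal{Z}|=L$, such that the joint distribution of $(X,Z,Y)$ has $(X,Y)$-marginal equal to $P_{X,Y}$, $X-Z-Y$ form a Markov chain in this order, and \[ I(X;Z)-I(X;Y)\leq 128\,L^{-2}. \]
   Context: All logarithms (and hence mutual informations) are to the natural base. *)

From HB Require Import structures.
From mathcomp Require Import all_boot all_order all_algebra.
From mathcomp Require Import reals exp.
Set Implicit Arguments. Unset Strict Implicit. Unset Printing Implicit Defensive.
Import Order.TTheory GRing.Theory Num.Theory.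
Local Open Scope ring_scope.

Section Info.
Variable R : realType.

Definition is_pmf (T : finType) (p : {ffun T -> R}) : Prop :=
  (forall t, 0 <= p t) /\ \sum_t p t = 1.

Definition marg1 (A B : finType) (p : {ffun A * B -> R}) (a : A) : R :=
  \sum_b p (a, b).
Definition marg2 (A B : finType) (p : {ffun A * B -> R}) (b : B) : R :=
  \sum_a p (a, b).

Definition mutinfo (A B : finType) (p : {ffun A * B -> R}) : R :=
  \sum_(ab : A * B)
    (if 0 < p ab
     then p ab * ln (p ab / (marg1 p ab.1 * marg2 p ab.2))
     else 0).

Definition pXY (A C B : finType) (q : {ffun A * C * B -> R}) : {ffun A * B -> R} :=
  [ffun ab => \sum_c q (ab.1, c, ab.2)].
Definition pXZ (A C B : finType) (q : {ffun A * C * B -> R}) : {ffun A * C -> R} :=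
  [ffun ac => \sum_b q (ac.1, ac.2, b)].
Definition pZY (A C B : finType) (q : {ffun A * C * B -> R}) : {ffun C * B -> R} :=
  [ffun cb => \sum_a q (a, cb.1, cb.2)].
Definition pZ (A C B : finType) (q : {ffun A * C * B -> R}) (c : C) : R :=
  \sum_a \sum_b q (a, c, b).

Definition markov_XZY (A C B : finType) (q : {ffun A * C * B -> R}) : Prop :=
  forall a c b, q (a, c, b) * pZ q c = pXZ q (a, c) * pZY q (c, b).

End Info.

From HB Require Import structures.
From mathcomp Require Import all_boot all_order all_algebra.
From mathcomp Require Import reals exp.
From mathcomp Require Import ring lra zify.
Import Order.TTheory GRing.Theory Num.Theory.
Local Open Scope ring_scope.
Set Implicit Arguments. Unset Strict Implicit. Unset Printing Implicit Defensive.

(* Let [t y = P(X = x0 | Y = y)] and fix levels [0 = g 0 < ... < g N = 1] with [N < L].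
   Given [Y = y], [Z] is one of the two levels bracketing [t y], drawn so that its mean
   level is [t y]; then [X] is redrawn from [Z] with [P(X = x0 | Z = i) = g i].  This is
   a Markov chain [X - Z - Y] which keeps the law of [(X, Y)], and, conditionally on
   [Y = y], [I(X;Z) - I(X;Y)] is the Jensen gap of [u |-> u ln (u / p)] over the two
   levels.  That gap is at most the chi-square spread, which for a binary [X] equals
   [(t - g i) (g (i+1) - t) / (t (1 - t))].  On the grid [g i = i^2 / (2 k^2)], mirrored
   above [1/2], with [N = 2 k < L], this is at most [8 / k^2 <= 128 / L^2]. *)

Section KullbackLeibler.
Variable R : realType.

Definition kl_term (u p : R) : R := if 0 < u then u * ln (u / p) else 0.

Lemma ln_le_subr1 (x : R) : 0 < x -> ln x <= x - 1.
Proof. by move=> x0; have := @le_ln1Dx R (x - 1); rewrite [1 + _]addrC subrK; apply; lra. Qed.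

Lemma kl_term_le (u s p : R) : 0 <= u -> 0 < s -> 0 < p ->
  kl_term u p <= u * (u / s - 1) + u * ln (s / p).
Proof.
move=> u0 s0 p0; rewrite /kl_term; case: ltgtP u0 => // [u_gt0 _|<- _]; last first.
  by rewrite !mul0r addr0.
have -> : u / p = u / s * (s / p) by field; rewrite !gt_eqF.
by rewrite lnM ?posrE ?divr_gt0 // mulrDr lerD2r ler_wpM2l ?ln_le_subr1 ?divr_gt0 ?(ltW u_gt0).
Qed.

(* If the mean vanishes both sides are [0], the right one because [x / 0 = 0]. *)
Lemma kl_mixture_gap_le (I : finType) (mu u : I -> R) (p : R) :
  (forall i, 0 <= mu i) -> \sum_i mu i = 1 -> (forall i, 0 <= u i) ->
  (0 < \sum_i mu i * u i -> 0 < p) ->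
  \sum_i mu i * kl_term (u i) p - kl_term (\sum_i mu i * u i) p <=
  (\sum_i mu i * (u i - \sum_j mu j * u j) ^+ 2) / \sum_j mu j * u j.
Proof.
move=> mu_ge0 sum_mu u_ge0 p_pos; set m := \sum_j mu j * u j.
have mu_u_ge0 i : 0 <= mu i * u i by rewrite mulr_ge0.
have [m_gt0|] := ltP 0 m.
  have p_gt0 := p_pos m_gt0.
  rewrite lerBlDr; apply: le_trans (_ : \sum_i mu i *
      (u i * (u i / m - 1) + u i * ln (m / p)) <= _).
    by apply: ler_sum => i _; rewrite ler_wpM2l ?kl_term_le.
  rewrite (eq_bigr (fun i => mu i * (u i - m) ^+ 2 / m + (mu i * u i - m * mu i)
      + mu i * u i * ln (m / p))); last by move=> i _; field; rewrite gt_eqF.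
  rewrite !big_split /= -mulr_suml sumrN -mulr_sumr sum_mu mulr1 -/m subrr addr0.
  by rewrite -mulr_suml -/m /kl_term m_gt0.
rewrite le_eqVlt ltNge sumr_ge0 // orbF => /eqP m0.
have {}mu_u0 i : mu i * u i = 0.
  by move/eqP: m0; rewrite psumr_eq0 // => /allP/(_ i (mem_index_enum i))/eqP.
rewrite m0 invr0 mulr0 /kl_term ltxx subr0 big1 // => i _.
have /eqP := mu_u0 i; rewrite mulf_eq0 => /orP[]/eqP->; first by rewrite mul0r.
by rewrite ltxx mulr0.
Qed.

Lemma mutinfo_summand_kl (u v p : R) : 0 <= u -> 0 <= v ->
  (if 0 < u * v then u * v * ln (u * v / (p * v)) else 0) = v * kl_term u p.
Proof.
move=> u0; rewrite le_eqVlt => /orP[/eqP<-|v_gt0]; first by rewrite !mulr0 ltxx mul0r.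
rewrite /kl_term pmulr_lgt0 //; case: ifP => _; last by rewrite mulr0.
by rewrite invfM mulrACA divff ?gt_eqF // mulr1 mulrAC mulrC.
Qed.

Lemma binary_chi2_le (t V e : R) : 0 <= t <= 1 -> 0 <= e ->
  V <= e * t * (1 - t) -> V / t + V / (1 - t) <= e.
Proof.
move=> /andP[t0 t1] e0 V_le.
suff [le0 le1] : V / t <= e * (1 - t) /\ V / (1 - t) <= e * t by lra.
split.
  case: ltgtP t0 => // [t_gt0 _|<- _]; last by rewrite invr0 mulr0 mulr_ge0 ?subr_ge0.
  by rewrite ler_pdivrMr // mulrAC.
case: ltgtP t1 => // [t_lt1 _|-> _]; last by rewrite subrr invr0 mulr0 mulr_ge0.
by rewrite ler_pdivrMr ?subr_gt0.
Qed.

End KullbackLeibler.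

Lemma sum_pair (R : realType) (A B : finType) (F : A * B -> R) :
  \sum_p F p = \sum_a \sum_b F (a, b).
Proof. by rewrite pair_bigA; apply: eq_bigr => -[]. Qed.

Section MarkovChain.
Variables (R : realType) (X Z Y : finType).
Variables (w : Y -> R) (mu : Y -> Z -> R) (r : Z -> X -> R).
Hypothesis w_ge0 : forall y, 0 <= w y.
Hypothesis sum_w : \sum_y w y = 1.
Hypothesis mu_ge0 : forall y z, 0 <= mu y z.
Hypothesis sum_mu : forall y, \sum_z mu y z = 1.
Hypothesis r_ge0 : forall z x, 0 <= r z x.
Hypothesis sum_r : forall z, \sum_x r z x = 1.

Definition chain : {ffun X * Z * Y -> R} :=
  [ffun xzy => w xzy.2 * mu xzy.2 xzy.1.2 * r xzy.1.2 xzy.1.1].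

Definition mixture y x := \sum_z mu y z * r z x.
Definition chainX x := \sum_y w y * mixture y x.
Definition chainZ z := \sum_y w y * mu y z.

Lemma mixture_ge0 y x : 0 <= mixture y x.
Proof. by apply: sumr_ge0 => z _; rewrite mulr_ge0. Qed.

Lemma sum_mixture y : \sum_x mixture y x = 1.
Proof.
rewrite /mixture exchange_big -(sum_mu y); apply: eq_bigr => z _.
by rewrite -mulr_sumr sum_r mulr1.
Qed.

Lemma chainZ_ge0 z : 0 <= chainZ z.
Proof. by apply: sumr_ge0 => y _; rewrite mulr_ge0. Qed.

Lemma pXY_chain x y : pXY chain (x, y) = w y * mixture y x.
Proof.
rewrite ffunE mulr_sumr; apply: eq_bigr => z _.
by rewrite ffunE mulrA.
Qed.

Lemma pXZ_chain x z : pXZ chain (x, z) = r z x * chainZ z.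
Proof. by rewrite ffunE mulr_sumr; apply: eq_bigr => y _; rewrite ffunE mulrC. Qed.

Lemma pZY_chain z y : pZY chain (z, y) = w y * mu y z.
Proof.
rewrite ffunE -[RHS]mulr1 -(sum_r z) mulr_sumr.
by apply: eq_bigr => x _; rewrite ffunE.
Qed.

Lemma pZ_chain z : pZ chain z = chainZ z.
Proof.
rewrite /pZ exchange_big; apply: eq_bigr => y _.
by rewrite -(pZY_chain z y) ffunE.
Qed.

Lemma chain_markov : markov_XZY chain.
Proof. by move=> x z y; rewrite pZ_chain pXZ_chain pZY_chain ffunE /=; ring. Qed.

Lemma chain_pmf : is_pmf chain.
Proof.
split=> [xzy|]; first by rewrite ffunE !mulr_ge0.
rewrite !sum_pair; transitivity (\sum_x \sum_y pXY chain (x, y)).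
  by apply: eq_bigr => x _; rewrite exchange_big; apply: eq_bigr => y _; rewrite ffunE.
rewrite exchange_big -sum_w; apply: eq_bigr => y _.
by rewrite (eq_bigr _ (fun x _ => pXY_chain x y)) -mulr_sumr sum_mixture mulr1.
Qed.

Lemma marg1_pXY_chain x : marg1 (pXY chain) x = chainX x.
Proof. by apply: eq_bigr => y _; rewrite pXY_chain. Qed.

Lemma marg2_pXY_chain y : marg2 (pXY chain) y = w y.
Proof.
by rewrite /marg2 (eq_bigr _ (fun x _ => pXY_chain x y)) -mulr_sumr sum_mixture mulr1.
Qed.

Lemma marg1_pXZ_chain x : marg1 (pXZ chain) x = chainX x.
Proof.
rewrite /marg1 (eq_bigr _ (fun z _ => pXZ_chain x z)) /chainX /mixture.
under eq_bigr do rewrite mulr_sumr.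
rewrite exchange_big; apply: eq_bigr => y _; rewrite mulr_sumr.
by apply: eq_bigr => z _; rewrite mulrCA (mulrC (r z x)).
Qed.

Lemma marg2_pXZ_chain z : marg2 (pXZ chain) z = chainZ z.
Proof.
rewrite /marg2 (eq_bigr _ (fun x _ => pXZ_chain x z)).
by rewrite -mulr_suml sum_r mul1r.
Qed.

Lemma mutinfo_pXZ_chain : mutinfo (pXZ chain) =
  \sum_x \sum_y w y * \sum_z mu y z * kl_term (r z x) (chainX x).
Proof.
rewrite /mutinfo sum_pair; apply: eq_bigr => x _.
rewrite (eq_bigr (fun z => chainZ z * kl_term (r z x) (chainX x))) => [|z _]; last first.
  by rewrite /= marg1_pXZ_chain marg2_pXZ_chain pXZ_chain mutinfo_summand_kl ?chainZ_ge0.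
rewrite /chainZ; under eq_bigr do rewrite mulr_suml.
rewrite exchange_big; apply: eq_bigr => y _; rewrite mulr_sumr.
by apply: eq_bigr => z _; rewrite mulrA.
Qed.

Lemma mutinfo_pXY_chain : mutinfo (pXY chain) =
  \sum_x \sum_y w y * kl_term (mixture y x) (chainX x).
Proof.
rewrite /mutinfo sum_pair; apply: eq_bigr => x _; apply: eq_bigr => y _ /=.
rewrite marg1_pXY_chain marg2_pXY_chain pXY_chain mulrC.
by rewrite mutinfo_summand_kl ?mixture_ge0.
Qed.

Lemma chain_info_gap_le (e : R) :
  (forall y, 0 < w y ->
     \sum_x (\sum_z mu y z * (r z x - mixture y x) ^+ 2) / mixture y x <= e) ->
  mutinfo (pXZ chain) - mutinfo (pXY chain) <= e.
Proof.
move=> chi2_le; rewrite mutinfo_pXZ_chain mutinfo_pXY_chain -sumrB.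
under eq_bigr do rewrite -sumrB.
rewrite exchange_big -[e]mul1r -sum_w mulr_suml; apply: ler_sum => y _.
under eq_bigr do rewrite -mulrBr.
rewrite -mulr_sumr; case: ltgtP (w_ge0 y) => // [w_gt0 _|<- _]; last by rewrite !mul0r.
rewrite ler_pM2l //; apply: le_trans (chi2_le y w_gt0); apply: ler_sum => x _.
apply: kl_mixture_gap_le => // mixture_gt0.
rewrite (lt_le_trans (mulr_gt0 w_gt0 mixture_gt0)) // /chainX (bigD1 y) //=.
by rewrite lerDl sumr_ge0 // => y' _; rewrite mulr_ge0 ?mixture_ge0.
Qed.

End MarkovChain.

Lemma sum_ord_pick (R : realType) (F : nat -> R) n i : (i < n)%N ->
  \sum_(j < n) (if j == i :> nat then F j else 0) = F i.
Proof. by move=> lt_in; rewrite -big_mkcond big_ord1_eq lt_in. Qed.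

Definition bracket_ok (R : realType) (e a b : R) :=
  forall s, a <= s <= b -> (s - a) * (b - s) <= e * s * (1 - s).

Section BinaryQuantizer.
Variables (R : realType) (X Y : finType) (P : {ffun X * Y -> R}) (x0 x1 : X).
Hypothesis x01 : x0 != x1.
Hypothesis X01 : forall x, x = x0 \/ x = x1.
Hypothesis P_pmf : is_pmf P.

Lemma sum_binary (f : X -> R) : \sum_x f x = f x0 + f x1.
Proof.
rewrite (bigD1 x0) //= (bigD1 x1) 1?eq_sym //= big1 ?addr0 // => x /andP[x_x1 x_x0].
by case: (X01 x) x_x0 x_x1 => ->; rewrite eqxx.
Qed.

Lemma P_ge0 x y : 0 <= P (x, y). Proof. by case: P_pmf. Qed.

Lemma marg2_ge0 y : 0 <= marg2 P y.
Proof. by apply: sumr_ge0 => x _; apply: P_ge0. Qed.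

Lemma sum_marg2 : \sum_y marg2 P y = 1.
Proof. by rewrite exchange_big -sum_pair; case: P_pmf. Qed.

(* The conditional probability P(X = x0 | Y = y), with junk value 0 when P(Y = y) = 0. *)
Definition cond0 y := P (x0, y) / marg2 P y.

Lemma marg2_cond0 y : marg2 P y * cond0 y = P (x0, y).
Proof.
have := P_ge0 x1 y; rewrite /cond0 /marg2 sum_binary.
have [sum0 P1_ge0|] := eqVneq (P (x0, y) + P (x1, y)) 0; last by move=> ? _; rewrite mulrC divfK.
by rewrite sum0 mul0r; have := P_ge0 x0 y; lra.
Qed.

Lemma cond0_01 y : 0 <= cond0 y <= 1.
Proof.
rewrite /cond0; case: ltgtP (marg2_ge0 y) => // [marg2_gt0 _|<- _]; last first.
  by rewrite invr0 mulr0 lexx ler01.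
rewrite divr_ge0 ?P_ge0 ?marg2_ge0 //= ler_pdivrMr // mul1r /marg2 sum_binary.
by rewrite lerDl P_ge0.
Qed.

Variables (L N : nat) (g : nat -> R) (idx : Y -> nat).
Hypothesis N_lt_L : (N < L)%N.
Hypothesis g01 : forall i, 0 <= g i <= 1.
Hypothesis g_incr : forall i, (i < N)%N -> g i < g i.+1.
Hypothesis idx_bracket : forall y, (idx y < N)%N /\ g (idx y) <= cond0 y <= g (idx y).+1.

(* Chosen so that the mean level of [split_mass y] is [cond0 y]. *)
Definition lam y := (g (idx y).+1 - cond0 y) / (g (idx y).+1 - g (idx y)).

Definition split_mass y (z : 'I_L) : R :=
  (if z == idx y :> nat then lam y else 0) + (if z == (idx y).+1 :> nat then 1 - lam y else 0).

Definition level (z : 'I_L) x : R := if x == x0 then g z else 1 - g z.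

Lemma level_gap y : g (idx y).+1 - g (idx y) != 0.
Proof. by have [lt_idx _] := idx_bracket y; rewrite subr_eq0 gt_eqF ?g_incr. Qed.

Lemma lam01 y : 0 <= lam y <= 1.
Proof.
have [lt_idx /andP[g_le le_g]] := idx_bracket y; have := g_incr lt_idx.
rewrite /lam => g_lt; have gap_gt0 : 0 < g (idx y).+1 - g (idx y) by rewrite subr_gt0.
by rewrite divr_ge0 ?subr_ge0 ?(ltW g_lt) //= ler_pdivrMr // mul1r lerD2l lerN2.
Qed.

Lemma split_mass_ge0 y z : 0 <= split_mass y z.
Proof. by have := lam01 y; rewrite /split_mass; do 2 case: ifP => _; lra. Qed.

Lemma sum_split_mass y (f : nat -> R) :
  \sum_z split_mass y z * f z = lam y * f (idx y) + (1 - lam y) * f (idx y).+1.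
Proof.
have [lt_idx _] := idx_bracket y.
rewrite -(sum_ord_pick (fun i => lam y * f i) (ltn_trans lt_idx N_lt_L)).
rewrite -(sum_ord_pick (fun i => (1 - lam y) * f i) (leq_ltn_trans lt_idx N_lt_L)).
by rewrite -big_split; apply: eq_bigr => z _; rewrite mulrDl; do 2 case: ifP => _;
  rewrite ?mul0r.
Qed.

Lemma sum_split_mass1 y : \sum_z split_mass y z = 1.
Proof.
have := sum_split_mass y (fun => 1); rewrite !mulr1 subrKC => <-.
by apply: eq_bigr => z _; rewrite mulr1.
Qed.

Lemma split_mass_mean y : \sum_z split_mass y z * g z = cond0 y.
Proof. by rewrite sum_split_mass /lam; field; apply: level_gap. Qed.

Lemma split_mass_var y : \sum_z split_mass y z * (g z - cond0 y) ^+ 2 =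
  (cond0 y - g (idx y)) * (g (idx y).+1 - cond0 y).
Proof.
rewrite (sum_split_mass y (fun i => (g i - cond0 y) ^+ 2)) /lam.
by field; apply: level_gap.
Qed.

Lemma level_ge0 z x : 0 <= level z x.
Proof. by rewrite /level; have := g01 z; case: ifP => _; lra. Qed.

Lemma sum_level z : \sum_x level z x = 1.
Proof. by rewrite sum_binary /level eqxx eq_sym (negbTE x01) subrKC. Qed.

Definition quantizer := chain (marg2 P) split_mass level.

Lemma mixture_level y x :
  mixture split_mass level y x = if x == x0 then cond0 y else 1 - cond0 y.
Proof.
rewrite /mixture /level; case: ifP => _; first exact: split_mass_mean.
under eq_bigr do rewrite mulrBr mulr1.
by rewrite sumrB sum_split_mass1 split_mass_mean.
Qed.

Lemma pXY_quantizer : pXY quantizer = P.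
Proof.
apply/ffunP => -[x y]; rewrite pXY_chain mixture_level.
case: (X01 x) => ->; first by rewrite eqxx marg2_cond0.
by rewrite eq_sym (negbTE x01) mulrBr mulr1 marg2_cond0 /marg2 sum_binary addrC addKr.
Qed.

Lemma quantizer_pmf : is_pmf quantizer.
Proof.
apply: chain_pmf; [exact: marg2_ge0 | exact: sum_marg2 | exact: split_mass_ge0
  | exact: sum_split_mass1 | exact: level_ge0 | exact: sum_level].
Qed.

Lemma quantizer_markov : markov_XZY quantizer.
Proof. by apply: chain_markov; apply: sum_level. Qed.

Variable e : R.
Hypothesis e_ge0 : 0 <= e.
Hypothesis g_brackets : forall i, (i < N)%N -> bracket_ok e (g i) (g i.+1).

Lemma quantizer_info_gap : mutinfo (pXZ quantizer) - mutinfo P <= e.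
Proof.
rewrite -{1}pXY_quantizer; apply: chain_info_gap_le;
  [exact: marg2_ge0 | exact: sum_marg2 | exact: split_mass_ge0
  | exact: sum_split_mass1 | exact: level_ge0 | exact: sum_level | move=> y _].
rewrite sum_binary !mixture_level /level eqxx eq_sym (negbTE x01).
have sq_flip a b : (1 - a - (1 - b)) ^+ 2 = (a - b) ^+ 2 :> R by ring.
rewrite [X in _ + X / _ <= _](eq_bigr (fun z => split_mass y z * (g z - cond0 y) ^+ 2));
  last by move=> z _; rewrite sq_flip.
apply: binary_chi2_le => //; first exact: cond0_01.
rewrite split_mass_var; have [lt_idx bracket] := idx_bracket y.
exact: g_brackets.
Qed.

End BinaryQuantizer.

Definition is_grid (R : realType) (g : nat -> R) (N : nat) (e : R) :=
  [/\ g 0%N = 0, g N = 1, forall i, 0 <= g i <= 1,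
      forall i, (i < N)%N -> g i < g i.+1 &
      forall i, (i < N)%N -> bracket_ok e (g i) (g i.+1)].

Lemma exists_bracket (R : realType) (g : nat -> R) (N : nat) (s : R) : (0 < N)%N ->
  g 0%N <= s -> s <= g N -> exists i, (i < N)%N /\ g i <= s <= g i.+1.
Proof.
move=> + g0_le; elim: N => // -[_ _ le_g1|n IH _ le_gN]; first by exists 0%N; rewrite g0_le.
have [le_s|lt_s] := leP s (g n.+1).
  by have [i [lt_i bracket]] := IH isT le_s; exists i; split; first exact: ltnW.
by exists n.+1; rewrite le_gN ltW.
Qed.

Lemma exists_markov_quantizer (R : realType) (X Y : finType) (P : {ffun X * Y -> R})
    (x0 x1 : X) (L N : nat) (g : nat -> R) (e : R) :
  x0 != x1 -> (forall x, x = x0 \/ x = x1) -> is_pmf P ->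
  (N < L)%N -> 0 <= e -> is_grid g N e ->
  exists Q : {ffun X * 'I_L * Y -> R},
    [/\ is_pmf Q, pXY Q = P, markov_XZY Q & mutinfo (pXZ Q) - mutinfo P <= e].
Proof.
move=> x01 X01 P_pmf N_lt_L e_ge0 [g0 gN g01 g_incr g_brackets].
have N_gt0 : (0 < N)%N.
  by rewrite lt0n; apply: contra_eq_neq gN => ->; rewrite g0 eq_sym oner_neq0.
have /fin_all_exists[idx idx_bracket] y :
    exists i, (i < N)%N /\ g i <= cond0 P x0 y <= g i.+1.
  have /andP[? ?] := cond0_01 x01 X01 P_pmf y.
  by apply: exists_bracket; rewrite ?g0 ?gN.
exists (quantizer P x0 L g idx); split.
- exact (quantizer_pmf x01 X01 P_pmf N_lt_L g01 g_incr idx_bracket).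
- exact (pXY_quantizer x01 X01 P_pmf N_lt_L g_incr idx_bracket).
- exact (quantizer_markov P x01 X01 g idx).
- exact (quantizer_info_gap x01 X01 P_pmf N_lt_L g01 g_incr idx_bracket e_ge0 g_brackets).
Qed.

Lemma bracket_ok_sym (R : realType) (e a b : R) :
  bracket_ok e a b -> bracket_ok e (1 - b) (1 - a).
Proof.
move=> ok s /andP[le_s s_le].
have /ok : a <= 1 - s <= b by apply/andP; split; lra.
lra.
Qed.

Lemma bracket_ok_zero (R : realType) (e b : R) : b <= 1 -> b <= e -> bracket_ok e 0 b.
Proof.
move=> b_le1 b_le s /andP[s_ge0 s_le]; rewrite subr0 -mulrA mulrCA ler_wpM2l //.
by case: (leP e 1) => _; nra.
Qed.

Lemma bracket_ok_spread (R : realType) (e a b : R) : 0 <= a -> b <= 1 -> 0 <= e ->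
  (b - a) ^+ 2 <= 4 * e * a * (1 - b) -> bracket_ok e a b.
Proof.
move=> a_ge0 b_le1 e_ge0 spread_le s /andP[a_le s_le].
have amgm : (s - a) * (b - s) <= (b - a) ^+ 2 / 4.
  by rewrite ler_pdivlMr ?ltr0n //; have := sqr_ge0 (2 * s - a - b); lra.
have : e * a * (1 - b) <= e * s * (1 - s).
  by rewrite -!mulrA ler_wpM2l //; apply: ler_pM; lra.
by move: amgm; rewrite ler_pdivlMr ?ltr0n //; lra.
Qed.

Lemma sq_spread_le (R : realType) (c u : R) : 0 < c -> 1 <= u ->
  (u + 1) ^+ 2 * c <= 1 / 2 ->
  ((u + 1) ^+ 2 * c - u ^+ 2 * c) ^+ 2 <= 4 * (16 * c) * (u ^+ 2 * c) * (1 - (u + 1) ^+ 2 * c).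
Proof.
move=> c_gt0 u_ge1 le_half.
have -> : (u + 1) ^+ 2 * c - u ^+ 2 * c = (2 * u + 1) * c by ring.
have : (2 * u + 1) ^+ 2 <= 32 * u ^+ 2 by nra.
rewrite exprMn -(ler_pM2r (exprn_gt0 2 c_gt0)) => /le_trans; apply.
have -> : 4 * (16 * c) * (u ^+ 2 * c) * (1 - (u + 1) ^+ 2 * c) =
  32 * u ^+ 2 * c ^+ 2 * (2 * (1 - (u + 1) ^+ 2 * c)) by ring.
by rewrite ler_peMr ?mulr_ge0 ?sqr_ge0 //; lra.
Qed.

Section SquareGrid.
Variables (R : realType) (k : nat).
Hypothesis k_gt0 : (0 < k)%N.

(* Levels [i^2 c] up to [1/2], mirrored above [1/2]: near [t = 0] the bracket
   around [t] has width of order [sqrt (c t)], as [bracket_ok] demands. *)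
Definition sq_step : R := (2 * k%:R ^+ 2)^-1.

Definition sq_grid (i : nat) : R :=
  if (i <= k)%N then i%:R ^+ 2 * sq_step else 1 - (2 * k - i)%:R ^+ 2 * sq_step.

Lemma sq_step_gt0 : 0 < sq_step.
Proof. by rewrite invr_gt0 mulr_gt0 ?exprn_gt0 ?ltr0n. Qed.

Lemma sq_step_half : k%:R ^+ 2 * sq_step = 1 / 2.
Proof. by rewrite /sq_step; field; rewrite pnatr_eq0 -lt0n. Qed.

Lemma sq_le_half n : (n <= k)%N -> 0 <= n%:R ^+ 2 * sq_step <= 1 / 2.
Proof.
move=> le_nk; rewrite mulr_ge0 ?sqr_ge0 ?(ltW sq_step_gt0) //= -sq_step_half.
by rewrite ler_wpM2r ?(ltW sq_step_gt0) // -!natrX ler_nat leq_exp2r.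
Qed.

Lemma sq_grid_lower i : (i <= k)%N -> sq_grid i = i%:R ^+ 2 * sq_step.
Proof. by rewrite /sq_grid => ->. Qed.

Lemma sq_grid_upper i : (k <= i)%N -> sq_grid i = 1 - (2 * k - i)%:R ^+ 2 * sq_step.
Proof.
move=> le_ki; rewrite /sq_grid; case: ifP => // le_ik.
have -> : i = k by apply/eqP; rewrite eqn_leq le_ik le_ki.
have -> : (2 * k - k = k)%N by lia.
by rewrite sq_step_half; lra.
Qed.

Lemma sq_grid01 i : 0 <= sq_grid i <= 1.
Proof.
have [le_ik|lt_ki] := leqP i k.
  by rewrite sq_grid_lower //; have := sq_le_half le_ik; lra.
have le_k : (2 * k - i <= k)%N by lia.
by rewrite sq_grid_upper ?(ltnW lt_ki) //; have := sq_le_half le_k; lra.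
Qed.

Lemma sq_grid_incr i : (i < 2 * k)%N -> sq_grid i < sq_grid i.+1.
Proof.
move=> lt_i; have c_gt0 := sq_step_gt0.
case: (ltnP i k) => [lt_ik|le_ki].
  rewrite !sq_grid_lower ?(ltnW lt_ik) // ltr_pM2r // -!natrX ltr_nat ltn_exp2r //.
rewrite !sq_grid_upper 1?leqW // ltrD2l ltrN2 ltr_pM2r // -!natrX ltr_nat ltn_exp2r //.
lia.
Qed.

Lemma sq_grid_bracket_lower i : (i < k)%N ->
  bracket_ok (16 * sq_step) (sq_grid i) (sq_grid i.+1).
Proof.
move=> lt_ik; have c_gt0 := sq_step_gt0.
have := sq_le_half lt_ik; rewrite !sq_grid_lower ?(ltnW lt_ik) //.
case: i lt_ik => [|u] _ le_half.
  rewrite expr0n mul0r expr1n mul1r; apply: bracket_ok_zero; lra.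
apply: bracket_ok_spread; rewrite ?mulr_ge0 ?sqr_ge0 ?(ltW c_gt0) //; try lra.
rewrite -natr1; apply: sq_spread_le; rewrite ?ler1n ?natr1 //; lra.
Qed.

Lemma sq_grid_bracket i : (i < 2 * k)%N ->
  bracket_ok (16 * sq_step) (sq_grid i) (sq_grid i.+1).
Proof.
move=> lt_i; have [|le_ki] := ltnP i k; first exact: sq_grid_bracket_lower.
set j := (2 * k - i.+1)%N; have lt_jk : (j < k)%N by rewrite /j; lia.
have -> : sq_grid i = 1 - sq_grid j.+1.
  rewrite sq_grid_upper // sq_grid_lower //.
  by have -> : (2 * k - i = j.+1)%N by rewrite /j; lia.
have -> : sq_grid i.+1 = 1 - sq_grid j.
  by rewrite sq_grid_upper ?sq_grid_lower ?(ltnW lt_jk) ?leqW.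
exact/bracket_ok_sym/sq_grid_bracket_lower.
Qed.

Lemma sq_grid_is_grid : is_grid sq_grid (2 * k) (16 * sq_step).
Proof.
split; [by rewrite sq_grid_lower // expr0n mul0r | | exact: sq_grid01
  | exact: sq_grid_incr | exact: sq_grid_bracket].
by rewrite sq_grid_upper ?leq_pmull // subnn expr0n mul0r subr0.
Qed.

End SquareGrid.

Lemma two_level_grid (R : realType) :
  is_grid (fun i => if i == 0%N then 0 else 1 : R) 1 1.
Proof.
split=> // [i|[|//] _|[|//] _]; first by case: ifP => _; rewrite lexx ler01.
  exact: ltr01.
exact: bracket_ok_zero.
Qed.

Lemma exists_grid (R : realType) (L : nat) : (2 <= L)%N ->
  exists N (g : nat -> R) e,
    [/\ (N < L)%N, 0 <= e, is_grid g N e & e <= 128 / L%:R ^+ 2].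
Proof.
move=> le2L; have [le_L2|lt2L] := leqP L 2.
  have -> : L = 2%N by lia.
  exists 1%N, (fun i => if i == 0%N then 0 else 1), 1; split=> //; first exact: two_level_grid.
  by rewrite ler_pdivlMr ?exprn_gt0 ?ltr0n // mul1r -natrX ler_nat.
set k := (L.-1 %/ 2)%N; have k_gt0 : (0 < k)%N by rewrite /k; lia.
exists (2 * k)%N, (sq_grid R k), (16 * sq_step R k); split.
- by rewrite /k; lia.
- by rewrite mulr_ge0 // ltW // sq_step_gt0.
- exact: sq_grid_is_grid.
have L_le : (L%:R ^+ 2 : R) <= 16 * k%:R ^+ 2.
  by rewrite -!natrX -natrM ler_nat; rewrite /k; nia.
have L2_gt0 : (0 : R) < L%:R ^+ 2 by rewrite exprn_gt0 // ltr0n; lia.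
have k2_gt0 : (0 : R) < 2 * k%:R ^+ 2 by rewrite mulr_gt0 ?exprn_gt0 ?ltr0n.
by rewrite /sq_step ler_pdivlMr // mulrAC ler_pdivrMr //; lra.
Qed.

Lemma card2_elements (X : finType) : #|X| = 2%N ->
  exists x0 x1 : X, x0 != x1 /\ forall x, x = x0 \/ x = x1.
Proof.
rewrite cardE; case E: (enum X) => [|x0 [|x1 []]] // _; exists x0, x1; split.
  by have := enum_uniq X; rewrite E /= inE andbT.
by move=> x; have := mem_enum X x; rewrite E !inE => /orP[]/eqP; [left | right].
Qed.

Theorem theorem1 (R : realType) (X Y : finType) (P : {ffun X * Y -> R})
  (hX : #|X| = 2%N) (hP : is_pmf P) (L : nat) (hL : (2 <= L)%N) :
  exists Q : {ffun X * 'I_L * Y -> R},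
    [/\ is_pmf Q, pXY Q = P, markov_XZY Q &
        mutinfo (pXZ Q) - mutinfo P <= 128 / (L%:R ^+ 2)].
Proof.
have [x0 [x1 [x01 X01]]] := card2_elements hX.
have [N [g [e [N_lt_L e_ge0 g_grid e_le]]]] := exists_grid R hL.
have [Q [Q_pmf pXY_Q markov_Q gap_le]] := exists_markov_quantizer x01 X01 hP N_lt_L e_ge0 g_grid.
by exists Q; split => //; apply: le_trans gap_le e_le.
Qed.
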